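(* Let $K,L>0$ with $K\sqrt L\ge1$, let $A(p,q)=(p^2q)^{1/3}$ and $A^\delta(p,q)=\operatorname{sgn}(q)\min(\lvert A(p,q)\rvert,K\lvert p\rvert,L\lvert q\rvert)$. Then \[ \left\lvert\frac{d}{dp}A^\delta(p,q)\right\rvert\le K,\qquad\left\lvert\frac{d}{dq}A^\delta(p,q)\right\rvert\le L \] wherever the derivatives exist, and $A^\delta$ is Lipschitz continuous. Moreover, \[ \lvert A^\delta(p,q)-A(p,q)\rvert\le\max\left(\frac{4}{27K^2}\lvert q\rvert,\frac{2}{3\sqrt{3L}}\lvert p\rvert\right)\quad\text{for all }p,q\in\mathbb R. \]
   Context: Real cube root; $\operatorname{sgn}(q)=q/\lvert q\rvert$ for $q\neq0$, $\operatorname{sgn}(0)=0$. *)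

From Stdlib Require Import Reals Lra.
From Coquelicot Require Import Coquelicot.
Open Scope R_scope.

Definition sgn (q : R) : R :=
  if Rlt_dec 0 q then 1 else if Rlt_dec q 0 then -1 else 0.

Definition cbrt (x : R) : R :=
  if Rlt_dec 0 x then Rpower x (1/3)
  else if Rlt_dec x 0 then - Rpower (- x) (1/3) else 0.

Definition A (p q : R) : R := cbrt (p ^ 2 * q).

Definition Adelta (K L p q : R) : R :=
  sgn q * Rmin (Rmin (Rabs (A p q)) (K * Rabs p)) (L * Rabs q).

From Stdlib Require Import Reals Lra Psatz.
From Coquelicot Require Import Coquelicot.
Open Scope R_scope.

(* In the coordinates u = |p|^(1/3), b = |q|^(1/3) the three competitors in
   A^delta become polynomials: |A| = u^2 b, K|p| = K u^3 and L|q| = L b^3.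
   Whenever u^2 b is the smaller of u^2 b and K u^3 we have b <= K u, so u^2 b
   grows no faster than K u^3; hence min(u^2 b, K u^3, L b^3) is nondecreasing
   and K-Lipschitz as a function of u^3 = |p|, and symmetrically L-Lipschitz as
   a function of b^3 = |q|.  Multiplying by sgn q keeps this because A^delta
   vanishes at q = 0.  Lipschitz bounds bound the partial derivatives.  The
   error |A - A^delta| is the largest of 0, u^2 b - K u^3 and u^2 b - L b^3,
   and each cubic gap is bounded by maximising it in one variable. *)

Lemma sgn_mul_abs x : sgn x * Rabs x = x.
Proof.
  unfold sgn; destruct (Rlt_dec 0 x); [|destruct (Rlt_dec x 0)].
  - rewrite Rabs_right; lra.
  - rewrite Rabs_left; lra.
  - replace x with 0 by lra; rewrite Rabs_R0; ring.
Qed.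

Lemma sgn_pow3 x : sgn x ^ 3 = sgn x.
Proof. unfold sgn; destruct (Rlt_dec 0 x); [|destruct (Rlt_dec x 0)]; ring. Qed.

Lemma Rabs_sgn_mul_le x y : Rabs (sgn x * y) <= Rabs y.
Proof.
  rewrite Rabs_mult; pose proof (Rabs_pos y).
  assert (Rabs (sgn x) <= 1)
    by (unfold sgn; repeat destruct Rlt_dec; unfold Rabs; destruct Rcase_abs; lra).
  pose proof (Rabs_pos (sgn x)); nra.
Qed.

Lemma pow3_lt r s : r < s -> r ^ 3 < s ^ 3.
Proof.
  intros h.
  assert (e : s ^ 3 - r ^ 3 = (s - r) * (3 * (r + s) ^ 2 + (s - r) ^ 2) / 4) by field.
  assert (0 < (s - r) * (3 * (r + s) ^ 2 + (s - r) ^ 2)).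
  { apply Rmult_lt_0_compat; [lra|].
    pose proof (pow2_ge_0 (r + s)); pose proof (pow_lt (s - r) 2 ltac:(lra)); lra. }
  lra.
Qed.

Lemma pow3_inj r s : r ^ 3 = s ^ 3 -> r = s.
Proof.
  intros h; destruct (Rtotal_order r s) as [lt | [eq | gt]]; auto.
  - apply pow3_lt in lt; lra.
  - apply pow3_lt in gt; lra.
Qed.

Lemma Rpower_third_pow3 x : 0 < x -> Rpower x (1/3) ^ 3 = x.
Proof.
  intros hx.
  rewrite <- Rpower_pow by (unfold Rpower; apply exp_pos).
  rewrite Rpower_mult; replace (1/3 * INR 3) with 1 by (simpl; field).
  now apply Rpower_1.
Qed.

Lemma cbrt_pow3 x : cbrt x ^ 3 = x.
Proof.
  unfold cbrt; destruct (Rlt_dec 0 x); [|destruct (Rlt_dec x 0)].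
  - now apply Rpower_third_pow3.
  - replace ((- Rpower (- x) (1/3)) ^ 3) with (- (Rpower (- x) (1/3) ^ 3)) by ring.
    rewrite Rpower_third_pow3; lra.
  - simpl; lra.
Qed.

Lemma cbrt_unique x r : r ^ 3 = x -> cbrt x = r.
Proof. intros h; apply pow3_inj; now rewrite cbrt_pow3. Qed.

Lemma cbrt_0 : cbrt 0 = 0.
Proof. apply cbrt_unique; ring. Qed.

Lemma cbrt_le s t : s <= t -> cbrt s <= cbrt t.
Proof.
  intros h; destruct (Rle_dec (cbrt s) (cbrt t)) as [|lt]; auto.
  apply Rnot_le_lt, pow3_lt in lt; rewrite !cbrt_pow3 in lt; lra.
Qed.

Lemma cbrt_ge0 x : 0 <= x -> 0 <= cbrt x.
Proof. intros h; rewrite <- cbrt_0; now apply cbrt_le. Qed.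

Lemma cbrt_mul x y : cbrt (x * y) = cbrt x * cbrt y.
Proof. apply cbrt_unique; now rewrite Rpow_mult_distr, !cbrt_pow3. Qed.

Lemma cbrt_pow x n : cbrt (x ^ n) = cbrt x ^ n.
Proof.
  apply cbrt_unique.
  now rewrite <- pow_mult, Nat.mul_comm, pow_mult, cbrt_pow3.
Qed.

Lemma cbrt_abs x : cbrt (Rabs x) = Rabs (cbrt x).
Proof. apply cbrt_unique; now rewrite RPow_abs, cbrt_pow3. Qed.

Lemma cbrt_sgn x : cbrt x = sgn x * cbrt (Rabs x).
Proof.
  apply cbrt_unique.
  now rewrite Rpow_mult_distr, sgn_pow3, cbrt_pow3, sgn_mul_abs.
Qed.

(** * A and A^delta in cube-root coordinates *)

Definition Adelta_cube (K L u b : R) : R :=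
  Rmin (Rmin (u ^ 2 * b) (K * u ^ 3)) (L * b ^ 3).

Lemma A_eq_cube p q : A p q = sgn q * (cbrt (Rabs p) ^ 2 * cbrt (Rabs q)).
Proof.
  unfold A; rewrite cbrt_mul, (cbrt_sgn q), <- pow2_abs, cbrt_pow; ring.
Qed.

Lemma Rabs_A p q : Rabs (A p q) = cbrt (Rabs p) ^ 2 * cbrt (Rabs q).
Proof.
  unfold A; rewrite <- cbrt_abs, Rabs_mult, <- RPow_abs, cbrt_mul, cbrt_pow.
  reflexivity.
Qed.

Lemma Adelta_eq_cube K L p q :
  Adelta K L p q = sgn q * Adelta_cube K L (cbrt (Rabs p)) (cbrt (Rabs q)).
Proof. unfold Adelta, Adelta_cube; now rewrite !cbrt_pow3, Rabs_A. Qed.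

Definition nondecr_lip (g : R -> R) (K : R) : Prop :=
  forall s t, 0 <= s <= t -> 0 <= g t - g s <= K * (t - s).

Lemma nondecr_lip_Rabs g K s t :
  nondecr_lip g K -> 0 <= s <= t -> Rabs (g t - g s) <= K * Rabs (t - s).
Proof.
  intros hg hst; destruct (hg s t hst).
  rewrite !Rabs_right; lra.
Qed.

Lemma nondecr_lip_even g K :
  nondecr_lip g K -> forall x y, Rabs (g (Rabs x) - g (Rabs y)) <= K * Rabs (x - y).
Proof.
  intros hg x y.
  assert (hK : 0 <= K) by (destruct (hg 0 1); lra).
  apply Rle_trans with (K * Rabs (Rabs x - Rabs y)).
  2: apply Rmult_le_compat_l; [lra | apply Rabs_triang_inv2].
  pose proof (Rabs_pos x); pose proof (Rabs_pos y).
  destruct (Rle_dec (Rabs x) (Rabs y)).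
  - rewrite Rabs_minus_sym, (Rabs_minus_sym (Rabs x)).
    apply nondecr_lip_Rabs; auto; lra.
  - apply nondecr_lip_Rabs; auto; lra.
Qed.

Lemma sgn_mul_nonneg g x : g 0 = 0 -> 0 <= x -> sgn x * g (Rabs x) = g (Rabs x).
Proof.
  intros g0 hx; unfold sgn; destruct (Rlt_dec 0 x); [ring|].
  replace x with 0 by lra; rewrite Rabs_R0, g0; ring.
Qed.

Lemma sgn_mul_nonpos g x : g 0 = 0 -> x <= 0 -> sgn x * g (Rabs x) = - g (Rabs x).
Proof.
  intros g0 hx; unfold sgn; destruct (Rlt_dec 0 x); [lra|].
  destruct (Rlt_dec x 0); [ring|].
  replace x with 0 by lra; rewrite Rabs_R0, g0; ring.
Qed.

Lemma nondecr_lip_odd g K :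
  nondecr_lip g K -> g 0 = 0 ->
  forall x y, Rabs (sgn x * g (Rabs x) - sgn y * g (Rabs y)) <= K * Rabs (x - y).
Proof.
  intros hg g0 x y.
  pose proof (nondecr_lip_even g K hg x y) as heven.
  assert (hbound : forall s, 0 <= g (Rabs s) <= K * Rabs s).
  { intros s; destruct (hg 0 (Rabs s)) as [h1 h2]; [split; [lra | apply Rabs_pos]|].
    rewrite g0 in h1, h2; lra. }
  destruct (hbound x), (hbound y).
  destruct (Rle_dec 0 x), (Rle_dec 0 y).
  - now rewrite !sgn_mul_nonneg.
  - rewrite sgn_mul_nonneg, sgn_mul_nonpos by (auto; lra).
    rewrite (Rabs_right x), (Rabs_left1 y), (Rabs_right (x - y)) in * by lra.
    rewrite Rabs_right; lra.
  - rewrite sgn_mul_nonpos, sgn_mul_nonneg by (auto; lra).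
    rewrite (Rabs_left1 x), (Rabs_right y), (Rabs_left1 (x - y)) in * by lra.
    rewrite Rabs_left1; lra.
  - rewrite !sgn_mul_nonpos by (auto; lra).
    now replace (- g (Rabs x) - - g (Rabs y)) with (- (g (Rabs x) - g (Rabs y)))
      by ring; rewrite Rabs_Ropp.
Qed.

Lemma nondecr_lip_cbrt (phi : R -> R) K :
  (forall u v, 0 <= u <= v -> 0 <= phi v - phi u <= K * (v ^ 3 - u ^ 3)) ->
  nondecr_lip (fun s => phi (cbrt s)) K.
Proof.
  intros hphi s t hst.
  replace (t - s) with (cbrt t ^ 3 - cbrt s ^ 3) by (rewrite !cbrt_pow3; ring).
  apply hphi; split; [apply cbrt_ge0 | apply cbrt_le]; lra.
Qed.

Lemma is_derive_Rabs_le f x l K :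
  is_derive f x l -> (forall y, Rabs (f y - f x) <= K * Rabs (y - x)) -> Rabs l <= K.
Proof.
  intros hd hlip; apply is_derive_Reals in hd.
  apply Rnot_lt_le; intros hlt.
  destruct (hd (Rabs l - K) ltac:(lra)) as [[d hd0] hdq]; simpl in hdq.
  set (h := d / 2).
  assert (hh : 0 < h) by (unfold h; lra).
  specialize (hdq h ltac:(lra) ltac:(rewrite Rabs_right; unfold h; lra)).
  assert (Rabs ((f (x + h) - f x) / h) <= K).
  { unfold Rdiv; rewrite Rabs_mult, Rabs_inv, (Rabs_right h) by lra.
    apply Rmult_le_reg_r with h; [lra|].
    rewrite Rmult_assoc, Rinv_l, Rmult_1_r by lra.
    specialize (hlip (x + h)); replace (x + h - x) with h in hlip by ring.
    rewrite (Rabs_right h) in hlip by lra; lra. }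
  pose proof (Rabs_triang_inv l ((f (x + h) - f x) / h)).
  rewrite Rabs_minus_sym in hdq; lra.
Qed.

Lemma Rmin_pow_incr (k n : nat) (a K u v : R) :
  (k <= n)%nat -> 0 <= a -> 0 <= K -> 0 <= u <= v ->
  0 <= Rmin (a * v ^ k) (K * v ^ n) - Rmin (a * u ^ k) (K * u ^ n) <= K * (v ^ n - u ^ n).
Proof.
  intros hkn ha hK huv.
  assert (huvk : a * u ^ k <= a * v ^ k) by (apply Rmult_le_compat_l, pow_incr; lra).
  assert (huvn : K * u ^ n <= K * v ^ n) by (apply Rmult_le_compat_l, pow_incr; lra).
  split; [unfold Rmin; repeat destruct Rle_dec; lra|].
  destruct (Rle_dec (K * u ^ n) (a * u ^ k)) as [hKa | haK].
  { rewrite (Rmin_right (a * u ^ k)) by lra; pose proof (Rmin_r (a * v ^ k) (K * v ^ n)); lra. }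
  rewrite (Rmin_left (a * u ^ k)) by lra; pose proof (Rmin_l (a * v ^ k) (K * v ^ n)).
  rewrite <- (Nat.sub_add k n hkn), !pow_add in *.
  set (m := (n - k)%nat) in *.
  assert (huk : 0 < u ^ k).
  { destruct (pow_le u k ltac:(lra)) as [| e]; auto; rewrite <- e in haK; lra. }
  assert (hak : a <= K * u ^ m) by nra.
  assert (a * (v ^ k - u ^ k) <= K * u ^ m * (v ^ k - u ^ k))
    by (apply Rmult_le_compat_r; [pose proof (pow_incr u v k huv)|]; lra).
  assert (K * u ^ m * v ^ k <= K * v ^ m * v ^ k).
  { apply Rmult_le_compat_r; [apply pow_le; lra|].
    apply Rmult_le_compat_l, pow_incr; lra. }
  lra.
Qed.

Lemma Rmin_incr_const x y M : y <= x -> 0 <= Rmin x M - Rmin y M <= x - y.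
Proof. intros h; unfold Rmin; repeat destruct Rle_dec; lra. Qed.

Lemma Rmin_gap_le x y z B C :
  x - y <= B -> x - z <= C -> 0 <= B -> 0 <= x - Rmin (Rmin x y) z <= Rmax B C.
Proof. intros; unfold Rmin, Rmax; repeat destruct Rle_dec; lra. Qed.

Section Truncation.

Variables K L : R.
Hypothesis hK : 0 < K.
Hypothesis hL : 0 < L.

Lemma Adelta_cube_incr_l u v b :
  0 <= b -> 0 <= u <= v ->
  0 <= Adelta_cube K L v b - Adelta_cube K L u b <= K * (v ^ 3 - u ^ 3).
Proof.
  intros hb huv; unfold Adelta_cube.
  pose proof (Rmin_pow_incr 2 3 b K u v ltac:(lia) hb ltac:(lra) huv) as hm.
  rewrite !(Rmult_comm b) in hm.
  set (mu := Rmin (u ^ 2 * b) (K * u ^ 3)) in *.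
  set (mv := Rmin (v ^ 2 * b) (K * v ^ 3)) in *.
  pose proof (Rmin_incr_const mv mu (L * b ^ 3)); lra.
Qed.

Lemma Adelta_cube_incr_r u b c :
  0 <= u -> 0 <= b <= c ->
  0 <= Adelta_cube K L u c - Adelta_cube K L u b <= L * (c ^ 3 - b ^ 3).
Proof.
  intros hu hbc; unfold Adelta_cube.
  rewrite <- !Rmin_assoc, !(Rmin_comm (K * u ^ 3)), !Rmin_assoc.
  pose proof (Rmin_pow_incr 1 3 (u ^ 2) L b c ltac:(lia)
                (pow_le u 2 hu) ltac:(lra) hbc) as hm.
  rewrite !pow_1 in hm.
  set (mb := Rmin (u ^ 2 * b) (L * b ^ 3)) in *.
  set (mc := Rmin (u ^ 2 * c) (L * c ^ 3)) in *.
  pose proof (Rmin_incr_const mc mb (K * u ^ 3)); lra.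
Qed.

Lemma Adelta_cube_0_r u : 0 <= u -> Adelta_cube K L u 0 = 0.
Proof.
  intros hu.
  assert (0 <= K * u ^ 3) by (apply Rmult_le_pos; [lra | now apply pow_le]).
  unfold Adelta_cube, Rmin; repeat destruct Rle_dec; simpl in *; lra.
Qed.

Lemma Adelta_lipschitz_l p1 p2 q :
  Rabs (Adelta K L p1 q - Adelta K L p2 q) <= K * Rabs (p1 - p2).
Proof.
  rewrite !Adelta_eq_cube, <- Rmult_minus_distr_l.
  eapply Rle_trans; [apply Rabs_sgn_mul_le|].
  apply (nondecr_lip_even (fun s => Adelta_cube K L (cbrt s) (cbrt (Rabs q)))).
  apply (nondecr_lip_cbrt (fun u => Adelta_cube K L u (cbrt (Rabs q)))); intros u v huv.
  apply Adelta_cube_incr_l; [apply cbrt_ge0, Rabs_pos | exact huv].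
Qed.

Lemma Adelta_lipschitz_r p q1 q2 :
  Rabs (Adelta K L p q1 - Adelta K L p q2) <= L * Rabs (q1 - q2).
Proof.
  assert (hu : 0 <= cbrt (Rabs p)) by apply cbrt_ge0, Rabs_pos.
  rewrite !Adelta_eq_cube.
  apply (nondecr_lip_odd (fun s => Adelta_cube K L (cbrt (Rabs p)) (cbrt s))).
  - apply (nondecr_lip_cbrt (Adelta_cube K L (cbrt (Rabs p)))); intros b c hbc; now apply Adelta_cube_incr_r.
  - simpl; rewrite cbrt_0; now apply Adelta_cube_0_r.
Qed.

Lemma Adelta_lipschitz p1 q1 p2 q2 :
  Rabs (Adelta K L p1 q1 - Adelta K L p2 q2) <= K * Rabs (p1 - p2) + L * Rabs (q1 - q2).
Proof.
  pose proof (Adelta_lipschitz_l p1 p2 q1); pose proof (Adelta_lipschitz_r p2 q1 q2).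
  pose proof (Rabs_triang (Adelta K L p1 q1 - Adelta K L p2 q1)
                          (Adelta K L p2 q1 - Adelta K L p2 q2)).
  replace (Adelta K L p1 q1 - Adelta K L p2 q2)
    with (Adelta K L p1 q1 - Adelta K L p2 q1 + (Adelta K L p2 q1 - Adelta K L p2 q2))
    by ring.
  lra.
Qed.

(* The gap is maximal at u = 2b/(3K). *)
Lemma cubic_gap_l u b :
  0 <= u -> 0 <= b -> u ^ 2 * b - K * u ^ 3 <= 4 / (27 * K ^ 2) * b ^ 3.
Proof.
  intros hu hb.
  assert (4 / (27 * K ^ 2) * b ^ 3 - (u ^ 2 * b - K * u ^ 3)
          = (2 * b - 3 * K * u) ^ 2 * (b + 3 * K * u) / (27 * K ^ 2)) by (field; lra).
  assert (0 <= (2 * b - 3 * K * u) ^ 2 * (b + 3 * K * u) / (27 * K ^ 2)).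
  { apply Rmult_le_pos; [apply Rmult_le_pos; [apply pow2_ge_0 | nra]|].
    apply Rlt_le, Rinv_0_lt_compat; nra. }
  lra.
Qed.

(* The gap is maximal at b = u / sqrt (3L). *)
Lemma cubic_gap_r u b :
  0 <= u -> 0 <= b -> u ^ 2 * b - L * b ^ 3 <= 2 / (3 * sqrt (3 * L)) * u ^ 3.
Proof.
  intros hu hb.
  set (s := sqrt (3 * L)).
  assert (hs : 0 < s) by (apply sqrt_lt_R0; lra).
  replace L with (s ^ 2 / 3) by (unfold s; rewrite pow2_sqrt; lra).
  assert (2 / (3 * s) * u ^ 3 - (u ^ 2 * b - s ^ 2 / 3 * b ^ 3)
          = (u - s * b) ^ 2 * (2 * u + s * b) / (3 * s)) by (field; lra).
  assert (0 <= (u - s * b) ^ 2 * (2 * u + s * b) / (3 * s)).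
  { apply Rmult_le_pos; [apply Rmult_le_pos; [apply pow2_ge_0 | nra]|].
    apply Rlt_le, Rinv_0_lt_compat; lra. }
  lra.
Qed.

Lemma Adelta_error p q :
  Rabs (Adelta K L p q - A p q)
    <= Rmax (4 / (27 * K ^ 2) * Rabs q) (2 / (3 * sqrt (3 * L)) * Rabs p).
Proof.
  rewrite Adelta_eq_cube, A_eq_cube, <- Rmult_minus_distr_l.
  eapply Rle_trans; [apply Rabs_sgn_mul_le|].
  set (u := cbrt (Rabs p)); set (b := cbrt (Rabs q)).
  assert (hu : 0 <= u) by apply cbrt_ge0, Rabs_pos.
  assert (hb : 0 <= b) by apply cbrt_ge0, Rabs_pos.
  replace (Rabs p) with (u ^ 3) by apply cbrt_pow3.
  replace (Rabs q) with (b ^ 3) by apply cbrt_pow3.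
  assert (hB : 0 <= 4 / (27 * K ^ 2) * b ^ 3).
  { apply Rmult_le_pos; [| now apply pow_le].
    apply Rlt_le, Rdiv_lt_0_compat; [lra | nra]. }
  destruct (Rmin_gap_le (u ^ 2 * b) (K * u ^ 3) (L * b ^ 3) _ _
              (cubic_gap_l u b hu hb) (cubic_gap_r u b hu hb) hB).
  unfold Adelta_cube; rewrite Rabs_minus_sym, Rabs_right; lra.
Qed.

End Truncation.

Theorem mainTheorem9 (K L : R) (hK : 0 < K) (hL : 0 < L) (hKL : 1 <= K * sqrt L) :
  (forall p q l, is_derive (fun x => Adelta K L x q) p l -> Rabs l <= K) /\
  (forall p q l, is_derive (fun y => Adelta K L p y) q l -> Rabs l <= L) /\
  (exists C : R, forall p1 q1 p2 q2 : R,
      Rabs (Adelta K L p1 q1 - Adelta K L p2 q2) <= C * (Rabs (p1 - p2) + Rabs (q1 - q2))) /\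
  (forall p q : R,
      Rabs (Adelta K L p q - A p q)
        <= Rmax (4 / (27 * K ^ 2) * Rabs q) (2 / (3 * sqrt (3 * L)) * Rabs p)).
Proof.
  split; [|split; [|split]].
  - intros p q l hd; apply (is_derive_Rabs_le _ _ _ _ hd); intros x.
    now apply Adelta_lipschitz_l.
  - intros p q l hd; apply (is_derive_Rabs_le _ _ _ _ hd); intros y.
    now apply Adelta_lipschitz_r.
  - exists (K + L); intros p1 q1 p2 q2.
    pose proof (Adelta_lipschitz K L hK hL p1 q1 p2 q2).
    pose proof (Rabs_pos (p1 - p2)); pose proof (Rabs_pos (q1 - q2)); nra.
  - intros p q; now apply Adelta_error.
Qed.
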